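(* Let $K$ be a locally compact Hausdorff space and $X$ a strictly convex real Banach space. Let $t_0\in K$ and $x_0\in S_X$. Then $A(t_0,x_0)=\{f\in S_{C_0(K,X)}: f(t_0)=x_0\}$ is a maximal norm-closed proper face of $B_{C_0(K,X)}$, equivalently, a maximal convex subset of $S_{C_0(K,X)}$.
   Context: All Banach spaces are real. $C_0(K,X)$ is the Banach space of continuous functions $K\to X$ vanishing at infinity, with sup norm. A Banach space is strictly convex if every point of its unit sphere is an extreme point of its closed unit ball. *)

From HB Require Import structures.
From mathcomp Require Import all_boot all_order all_algebra.
From mathcomp Require Import all_classical all_reals all_analysis.
Set Implicit Arguments. Unset Strict Implicit. Unset Printing Implicit Defensive.
Import Order.TTheory GRing.Theory Num.Theory.
Import numFieldNormedType.Exports.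
Local Open Scope classical_set_scope.
Local Open Scope ring_scope.

Section Defs.
Variables (R : realType) (X : normedModType R).

Definition ballX : set X := [set x | `|x| <= 1].
Definition sphX : set X := [set x | `|x| = 1].

Definition extreme_point (A : set X) (x : X) :=
  A x /\ forall (y z : X) (l : R), A y -> A z -> 0 < l < 1 ->
    x = l *: y + (1 - l) *: z -> y = x /\ z = x.

Definition strictly_convex := forall x, sphX x -> extreme_point ballX x.

Variable K : topologicalType.

Definition C0 : set (K -> X) :=
  [set f | continuous f /\
    forall eps : R, 0 < eps -> exists C : set K,
      compact C /\ forall t, ~ C t -> `|f t| < eps].

Definition supn (f : K -> X) : R := sup [set `|f t| | t in [set: K]].

Definition ballC0 : set (K -> X) := [set f | C0 f /\ supn f <= 1].
Definition sphC0 : set (K -> X) := [set f | C0 f /\ supn f = 1].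

Definition comb (l : R) (f g : K -> X) : K -> X :=
  fun t => l *: f t + (1 - l) *: g t.

Definition convex_fset (A : set (K -> X)) :=
  forall f g l, A f -> A g -> 0 <= l <= 1 -> A (comb l f g).

Definition face_ballC0 (F : set (K -> X)) :=
  F `<=` ballC0 /\ convex_fset F /\
  forall f g l, ballC0 f -> ballC0 g -> 0 < l < 1 -> F (comb l f g) ->
    F f /\ F g.

Definition norm_closed (F : set (K -> X)) :=
  F `<=` C0 /\
  forall g, C0 g -> (forall eps : R, 0 < eps ->
      exists f, F f /\ supn (fun t => f t - g t) < eps) -> F g.

Definition closed_proper_face (F : set (K -> X)) :=
  face_ballC0 F /\ norm_closed F /\ F !=set0 /\ F <> ballC0.

Definition maximal_closed_proper_face (F : set (K -> X)) :=
  closed_proper_face F /\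
  forall G, closed_proper_face G -> F `<=` G -> G = F.

Definition maximal_convex_in_sphC0 (F : set (K -> X)) :=
  F `<=` sphC0 /\ convex_fset F /\
  forall G, G `<=` sphC0 -> convex_fset G -> F `<=` G -> G = F.

Definition A_set (t0 : K) (x0 : X) : set (K -> X) :=
  [set f | sphC0 f /\ f t0 = x0].

End Defs.

From HB Require Import structures.
From mathcomp Require Import all_boot all_order all_algebra.
From mathcomp Require Import all_classical all_reals all_analysis.
From mathcomp Require Import lra.
Import Order.TTheory GRing.Theory Num.Theory.
Import numFieldNormedType.Exports.
Local Open Scope classical_set_scope.
Local Open Scope ring_scope.
Set Implicit Arguments. Unset Strict Implicit. Unset Printing Implicit Defensive.

(* If g is in the unit ball and g(t0) <> x0, strict convexity gives
   |x0 + g(t0)| < 2, so |x0 + g| stays below some b < 2 on a neighbourhood V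
   of t0.  With an Urysohn function phi supported in V and phi(t0) = 1, the
   function f = phi x0 + (phi - 1) g lies in A(t0,x0) and (f + g)/2 =
   (phi/2)(x0 + g) has norm < 1.  Hence a convex subset of the ball strictly
   containing A(t0,x0) has an element of norm < 1: it is not contained in the
   sphere, and if it is a face it contains 0, hence (0 = (k + (-k))/2) the
   whole ball. *)

Section NormedSpace.
Variables (R : realType) (X : normedModType R).

Lemma ballX_convex (x y : X) (l : R) : ballX x -> ballX y -> 0 <= l <= 1 ->
  ballX (l *: x + (1 - l) *: y).
Proof.
rewrite /ballX /= => x1 y1 /andP[l0 l1].
rewrite (le_trans (ler_normD _ _)) // !normrZ ger0_norm // ger0_norm ?subr_ge0 //.
nra.
Qed.

Lemma sphX_neq0 (x : X) : sphX x -> x <> 0.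
Proof. by rewrite /sphX /= => + x0 => /eqP; rewrite x0 normr0 eq_sym oner_eq0. Qed.

Lemma strictly_convex_norm_add_lt (x y : X) : strictly_convex X ->
  sphX x -> ballX y -> y <> x -> `|x + y| < 2.
Proof.
move=> hX x1 y1 yx; rewrite lt_neqAle.
have -> : `|x + y| <= 2.
  by rewrite (le_trans (ler_normD _ _)) // -[2]/(1 + 1) lerD // x1.
rewrite andbT; apply/eqP => xy2.
have m1 : sphX (2^-1 *: (x + y)) by rewrite /sphX /= normrZ xy2 ger0_norm ?mulVf.
have l01 : 0 < (2:R)^-1 < 1 by rewrite invr_gt0 ltr0n /=; lra.
have x1' : ballX x by rewrite /ballX /= x1.
have [|e1 e2] := (hX _ m1).2 x y _ x1' y1 l01.
  by rewrite scalerDr; congr (_ + _); congr (_ *: _); lra.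
by apply: yx; rewrite e2 -e1.
Qed.
End NormedSpace.

Section SupNorm.
Variables (R : realType) (X : normedModType R) (K : topologicalType).
Implicit Types (f g : K -> X) (t : K).

Lemma C0_bounded f : C0 f -> exists M, forall t, `|f t| <= M.
Proof.
case=> cf /(_ 1 ltr01) [C [cC Cf]].
have /compact_bounded [M [_ HM]] : compact (f @` C).
  by apply: continuous_compact => //; exact: continuous_subspaceT.
exists (Num.max (M + 1) 1) => t; rewrite le_max.
have [Ct|nCt] := pselect (C t); last by rewrite (ltW (Cf _ nCt)) orbT.
by rewrite HM ?ltrDl //; exists t.
Qed.

Lemma supn_ub f t : (exists M, forall s, `|f s| <= M) -> `|f t| <= supn f.
Proof.
case=> M HM; apply: sup_upper_bound; last by exists t.
by split; [exists `|f t|, t | exists M => _ [s _ <-]].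
Qed.

Lemma supn_le f t0 M : (forall t, `|f t| <= M) -> supn f <= M.
Proof. by move=> HM; apply: ge_sup; [exists `|f t0|, t0 | move=> _ [s _ <-]]. Qed.

Lemma supn_eq1 f t0 : (forall t, `|f t| <= 1) -> `|f t0| = 1 -> supn f = 1.
Proof.
move=> f1 ft0; apply/eqP; rewrite eq_le (supn_le t0 f1) -[X in X <= _]ft0.
by rewrite supn_ub //; exists 1.
Qed.

Lemma ballC0_le1 f : ballC0 f -> forall t, `|f t| <= 1.
Proof. by case=> Cf s1 t; rewrite (le_trans _ s1) // supn_ub //; exact: C0_bounded. Qed.

Lemma ballC0P f t0 : ballC0 f <-> C0 f /\ forall t, `|f t| <= 1.
Proof.
split=> [bf|[Cf f1]]; first by split; [exact: bf.1 | exact: ballC0_le1].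
by split=> //; exact: supn_le t0 _ f1.
Qed.

Lemma C0_lincomb (a b : R) f g : C0 f -> C0 g ->
  C0 (fun t => a *: f t + b *: g t).
Proof.
case=> cf Hf [cg Hg]; split.
  by move=> t; apply: cvgD; apply: cvgZ; (exact: cvg_cst || exact: cf || exact: cg).
move=> eps eps0; set e := eps / (`|a| + `|b| + 1).
have ab1 : 0 < `|a| + `|b| + 1 by rewrite ltr_wpDl // addr_ge0.
have e0 : 0 < e by rewrite divr_gt0.
have [Cf [cCf HCf]] := Hf e e0; have [Cg [cCg HCg]] := Hg e e0.
exists (Cf `|` Cg); split; first exact: compactU.
move=> t /not_orP[/HCf/ltW fe /HCg/ltW ge].
rewrite (le_lt_trans (ler_normD _ _)) // !normrZ.
have -> : eps = (`|a| + `|b| + 1) * e by rewrite mulrC divfK ?gt_eqF.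
by rewrite mulrDl mul1r ltr_pwDr // mulrDl lerD // ler_wpM2l.
Qed.

Lemma C0_comb l f g : C0 f -> C0 g -> C0 (comb l f g).
Proof. exact: C0_lincomb. Qed.

Lemma C0_scale (a : R) f : C0 f -> C0 (fun t => a *: f t).
Proof.
move=> Cf; have := C0_lincomb a 0 Cf Cf; congr C0; apply: funext => t.
by rewrite scale0r addr0.
Qed.

Lemma C0_0 : C0 (fun _ : K => 0 : X).
Proof.
split=> [t|eps eps0]; first exact: cvg_cst.
by exists set0; split=> [|t _]; rewrite ?normr0 //; exact: compact0.
Qed.

Lemma ballC0_0 (t0 : K) : ballC0 (fun _ : K => 0 : X).
Proof. by apply/(ballC0P _ t0); split=> [|t]; rewrite ?normr0 //; exact: C0_0. Qed.

Lemma C0_bump_comb (phi : K -> R) (C : set K) (x : X) g :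
  continuous phi -> compact C -> (forall t, ~ C t -> phi t = 0) -> C0 g ->
  C0 (fun t => phi t *: x + (phi t - 1) *: g t).
Proof.
move=> cphi cC phi0 [cg Hg]; split.
  move=> t; apply: cvgD; apply: cvgZ; try exact: cvg_cst; try exact: cphi.
    by apply: cvgB; [exact: cphi | exact: cvg_cst].
  exact: cg.
move=> eps /Hg[Cg [cCg HCg]]; exists (C `|` Cg); split; first exact: compactU.
move=> t /not_orP[/phi0 -> /HCg].
by rewrite scale0r add0r sub0r scaleN1r normrN.
Qed.

End SupNorm.

Lemma exists_bump (R : realType) (K : topologicalType) (t0 : K) (V : set K) :
  hausdorff_space K -> locally_compact [set: K] -> open V -> V t0 ->
  exists (phi : K -> R) (C : set K), [/\ continuous phi,
    forall t, 0 <= phi t <= 1, phi t0 = 1, compact C &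
    forall t, ~ (C `&` V) t -> phi t = 0].
Proof.
move=> hK lcK oV Vt0.
have [U nU [cU _]] := lcK t0 I; rewrite withinET in nU.
have nUV : nbhs t0 (U `&` V) by apply: filterI => //; exact: open_nbhs_nbhs.
have cW : closed (~` interior (U `&` V)) by apply: open_closedC; exact: open_interior.
have /(@uniform_separatorP _ R) [f [cf f01 f0 f1]] :=
  @locally_compact_completely_regular K R lcK hK t0 _ cW (fun W => W nUV).
exists (fun t => 1 - f t), U; split=> //.
- by move=> t; apply: cvgB; [exact: cvg_cst | exact: cf].
- move=> t; have /f01 : range f (f t) by exists t.
  by rewrite /= in_itv /= => /andP[h0 h1]; rewrite subr_ge0 h1 lerBlDr lerDl h0.
- by rewrite (f0 (f t0)) ?subr0 //; exists t0.
- by move=> t UVt; rewrite (f1 (f t)) ?subrr //; exists t => // /interior_subset.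
Qed.

Section Faces.
Variables (R : realType) (X : normedModType R) (K : topologicalType) (t0 : K).
Implicit Types (F : set (K -> X)) (h : K -> X).

Lemma face_ballC0_mem0 F h (b : R) : face_ballC0 F -> F h ->
  (forall t, `|h t| <= b) -> b < 1 -> F (fun _ => 0).
Proof.
move=> [Fb [_ Fface]] Fh hb b1.
have b0 : 0 <= b by rewrite (le_trans _ (hb t0)).
set c := (1 + b) / 2; have c0 : 0 < c by rewrite /c; lra.
have bh' : ballC0 (fun t => c^-1 *: h t).
  apply/(ballC0P _ t0); split; first exact/C0_scale/(Fb _ Fh).1.
  move=> t; rewrite normrZ ger0_norm ?invr_ge0 ?(ltW c0) //.
  by rewrite mulrC ler_pdivrMr // mul1r (le_trans (hb t)) // /c; lra.
have l01 : 0 < 1 - c < 1 by rewrite /c; apply/andP; split; lra.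
have hE : comb (1 - c) (fun _ => 0) (fun t => c^-1 *: h t) = h.
  apply: funext => t; rewrite /comb scaler0 add0r opprB addrC subrK scalerA.
  by rewrite mulfV ?gt_eqF ?scale1r.
by have [|] := Fface _ _ _ (ballC0_0 _ t0) bh' l01; rewrite ?hE.
Qed.

Lemma face_ballC0_full F : face_ballC0 F -> F (fun _ => 0) -> F = @ballC0 R X K.
Proof.
move=> [Fb [_ Fface]] F0; apply/seteqP; split=> // k bk.
have bk' : ballC0 (fun t => -1 *: k t).
  apply/(ballC0P _ t0); split; first exact/C0_scale/bk.1.
  by move=> t; rewrite scaleN1r normrN ballC0_le1.
have l01 : 0 < (2:R)^-1 < 1 by rewrite invr_gt0 ltr0n /=; lra.
have kE : comb 2^-1 k (fun t => -1 *: k t) = (fun _ => 0).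
  apply: funext => t; rewrite /comb scalerA -scalerDl.
  by rewrite [X in X *: _](_ : _ = 0) ?scale0r //; lra.
by have [|] := Fface _ _ _ bk bk' l01; rewrite ?kE.
Qed.
End Faces.

Section ASet.
Variables (R : realType) (X : normedModType R) (K : topologicalType).
Variables (t0 : K) (x0 : X).
Hypothesis hx0 : sphX x0.
Local Notation A := (A_set t0 x0).
Local Notation ballC := (@ballC0 R X K).

Lemma A_set_sub_ballC0 : A `<=` ballC.
Proof. by move=> f [[Cf sf] _]; split; rewrite ?sf. Qed.

Lemma ballC0_A_set f : ballC0 f -> f t0 = x0 -> A f.
Proof.
move=> bf ft0; split=> //; split; first exact: bf.1.
by apply: (supn_eq1 (t0 := t0)); [exact: ballC0_le1 | rewrite ft0].
Qed.

Lemma A_set_convex : convex_fset A.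
Proof.
move=> f g l Af Ag l01.
have [bf bg] := (A_set_sub_ballC0 Af, A_set_sub_ballC0 Ag).
apply: ballC0_A_set; last by rewrite /comb Af.2 Ag.2 -scalerDl addrC subrK scale1r.
apply/(ballC0P _ t0); split; first exact: C0_comb bf.1 bg.1.
by move=> t; apply: ballX_convex => //; exact: ballC0_le1.
Qed.

Lemma A_set_face : strictly_convex X -> face_ballC0 A.
Proof.
move=> hX; split; first exact: A_set_sub_ballC0.
split=> [|f g l bf bg l01 [_ ht0]]; first exact: A_set_convex.
have [ft0 gt0] :=
  (hX x0 hx0).2 _ _ _ (ballC0_le1 bf t0) (ballC0_le1 bg t0) l01 (esym ht0).
by split; apply: ballC0_A_set.
Qed.

Lemma A_set_norm_closed : norm_closed A.
Proof.
split=> [f [[]]//|g Cg gA].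
have approx e : 0 < e -> exists f, A f /\ forall t, `|f t - g t| <= e.
  move=> e0; have [f [Af fg]] := gA e e0; exists f; split=> // t.
  apply: le_trans (ltW fg); apply: (supn_ub (f := fun s => f s - g s)).
  have [[Mf HMf] [Mg HMg]] := (C0_bounded (A_set_sub_ballC0 Af).1, C0_bounded Cg).
  by exists (Mf + Mg) => s; rewrite (le_trans (ler_normB _ _)) // lerD.
apply: ballC0_A_set.
  apply/(ballC0P _ t0); split=> // t; apply/ler_addgt0Pr => e /approx[f [Af fg]].
  rewrite -[g t](subKr (f t)) (le_trans (ler_normB _ _)) // lerD //.
  exact/ballC0_le1/A_set_sub_ballC0.
apply/eqP; rewrite -subr_eq0 -normr_le0; apply/ler_addgt0Pr => e /approx[f [Af fg]].
by rewrite add0r -Af.2 distrC.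
Qed.

Lemma A_set_neq_ballC0 : A <> ballC.
Proof.
move=> AE; have [_ /esym x00] : A (fun _ => 0) by rewrite AE; exact: ballC0_0.
exact: sphX_neq0 hx0 x00.
Qed.

Lemma exists_A_set_midpoint_lt1 g :
  hausdorff_space K -> locally_compact [set: K] -> strictly_convex X ->
  ballC0 g -> g t0 <> x0 ->
  exists f (b : R), [/\ A f, b < 1 & forall t, `|comb 2^-1 f g t| <= b].
Proof.
move=> hK lcK hX bg gx0; have g1 := ballC0_le1 bg.
set c := `|x0 + g t0|; have c0 : 0 <= c by exact: normr_ge0.
have c2 : c < 2.
  by apply: strictly_convex_norm_add_lt => //; rewrite /ballX /=; exact: g1.
set V := [set t | `|x0 + g t| < (2 + c) / 2].
have oV : open V.
  apply: (@open_comp _ _ (fun t => `|x0 + g t|) [set r | r < (2 + c) / 2]).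
    by move=> t _; apply: cvg_norm; apply: cvgD; [exact: cvg_cst | exact: bg.1.1].
  exact: open_lt.
have Vt0 : V t0 by rewrite /V /= -/c; lra.
have [phi [C [cphi phi01 phit0 cC phi0]]] := exists_bump R hK lcK oV Vt0.
pose f t := phi t *: x0 + (phi t - 1) *: g t.
have Af : A f.
  apply: ballC0_A_set; last by rewrite /f phit0 subrr scale0r addr0 scale1r.
  apply/(ballC0P _ t0); split.
    by apply: C0_bump_comb cC _ bg.1 => // t Ct; apply: phi0 => -[].
  move=> t; rewrite /f; have -> : (phi t - 1) *: g t = (1 - phi t) *: - g t.
    by rewrite scalerN -scaleNr opprB.
  by apply: ballX_convex; rewrite /ballX /= ?normrN ?hx0 ?g1.
exists f, ((2 + c) / 4); split=> //; first lra.
move=> t; have /andP[p0 p1] := phi01 t.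
have -> : comb 2^-1 f g t = (phi t / 2) *: (x0 + g t).
  rewrite /comb /f !scalerDr !scalerA -!addrA -scalerDl mulrC; congr (_ + _ *: _).
  lra.
rewrite normrZ ger0_norm ?divr_ge0 //.
have [Vt|nVt] := pselect (V t); last by rewrite phi0 ?mul0r; [lra | case].
have nn : 0 <= `|x0 + g t| by [].
move: Vt; rewrite /V /=; nra.
Qed.

Lemma A_set_nonempty : hausdorff_space K -> locally_compact [set: K] ->
  strictly_convex X -> A !=set0.
Proof.
move=> hK lcK hX; have x00 : 0 <> x0 by apply/nesym/sphX_neq0.
have [f [b [Af _ _]]] := exists_A_set_midpoint_lt1 hK lcK hX (ballC0_0 _ t0) x00.
by exists f.
Qed.

Lemma convex_strict_superset_A_set_norm_lt1 G g :
  hausdorff_space K -> locally_compact [set: K] -> strictly_convex X ->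
  convex_fset G -> A `<=` G -> G `<=` ballC -> G g -> ~ A g ->
  exists h (b : R), [/\ G h, b < 1 & forall t, `|h t| <= b].
Proof.
move=> hK lcK hX Gconv AG Gb Gg nAg.
have gx0 : g t0 <> x0 by move=> /(ballC0_A_set (Gb _ Gg)).
have [f [b [Af b1 hb]]] := exists_A_set_midpoint_lt1 hK lcK hX (Gb _ Gg) gx0.
exists (comb 2^-1 f g), b; split=> //; apply: Gconv => //; first exact: AG.
by rewrite invr_ge0 ler0n /=; lra.
Qed.
End ASet.

Theorem lemma2p11 (R : realType) (X : completeNormedModType R)
  (K : topologicalType)
  (hK : hausdorff_space K) (lcK : locally_compact [set: K])
  (hX : strictly_convex X) (t0 : K) (x0 : X) (hx0 : sphX x0) :
  maximal_closed_proper_face (A_set t0 x0) /\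
  maximal_convex_in_sphC0 (A_set t0 x0).
Proof.
split.
  split.
    split; first exact: A_set_face.
    split; first exact: A_set_norm_closed.
    by split; [exact: A_set_nonempty | exact: A_set_neq_ballC0].
  move=> G [Gface [_ [_ Gproper]]] AG; apply/seteqP; split=> // g Gg.
  apply: contrapT => nAg.
  have [h [b [Gh b1 hb]]] :=
    convex_strict_superset_A_set_norm_lt1 hx0 hK lcK hX Gface.2.1 AG Gface.1 Gg nAg.
  exact/Gproper/(face_ballC0_full t0 Gface)/(face_ballC0_mem0 t0 Gface Gh hb b1).
split; [by move=> f [] | split; first exact: A_set_convex].
move=> G Gs Gconv AG; apply/seteqP; split=> // g Gg; apply: contrapT => nAg.
have Gb : G `<=` ballC0 (K:=K) by move=> k /Gs[Ck sk]; split; rewrite ?sk.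
have [h [b [Gh b1 hb]]] :=
  convex_strict_superset_A_set_norm_lt1 hx0 hK lcK hX Gconv AG Gb Gg nAg.
by have := supn_le t0 hb; rewrite (Gs _ Gh).2; lra.
Qed.
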